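(* Let $N(r)\in\mathbb{R}[[r]]$, $r\in\mathbb{R}^d$, be a formal power series which is non-degenerate, i.e. there is no unit vector $\gamma\in\mathbb{R}^d$ with $\langle\partial_rN(r),\gamma\rangle=0$ as a formal series. Then there exist $p\in\mathbb{N}$ and $\sigma>0$ such that for every $k\in\mathbb{Z}^d\setminus\{0\}$ there is a unit vector $u_k\in\mathbb{R}^d$ for which the series $f_k(r)=\langle k/|k|,\partial_rN(r)\rangle$ satisfies $\max_{0\le j\le p}\left|\partial_t^j f_k(tu_k)\big|_{t=0}\right|\ge\sigma$.
   Context: For a formal series $f\in\mathbb{R}[[r]]$ and $u\in\mathbb{R}^d$, $\partial_t^jf(tu)|_{t=0}$ is $j!$ times the coefficient of $t^j$ in the formal series $t\mapsto f(tu)$. *)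

From Stdlib Require Import Reals ZArith Arith.
Open Scope R_scope.

(* Multi-indices alpha in N^d are encoded as functions nat -> nat; only
   those supported in {0,..,d-1} are relevant (see [supp_in]). *)
Definition mindex := nat -> nat.

(* A formal power series in r = (r_0,...,r_{d-1}): its coefficient family,
   N = sum_alpha N(alpha) r^alpha. *)
Definition fps := mindex -> R.

Definition supp_in (d : nat) (a : mindex) : Prop :=
  forall i, (d <= i)%nat -> a i = 0%nat.

Definition fps_eq0 (d : nat) (f : fps) : Prop :=
  forall a, supp_in d a -> f a = 0.

Definition upd (a : mindex) (i m : nat) : mindex :=
  fun l => if Nat.eqb l i then m else a l.

Definition incr (a : mindex) (i : nat) : mindex := upd a i (S (a i)).

Definition pderiv (f : fps) (i : nat) : fps :=
  fun a => INR (S (a i)) * f (incr a i).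

Fixpoint rsum (n : nat) (g : nat -> R) : R :=
  match n with O => 0 | S n' => rsum n' g + g n' end.
Fixpoint rprod (n : nat) (g : nat -> R) : R :=
  match n with O => 1 | S n' => rprod n' g * g n' end.

Definition dirderiv (d : nat) (N : fps) (v : nat -> R) : fps :=
  fun a => rsum d (fun i => v i * pderiv N i a).

Definition vnorm (d : nat) (v : nat -> R) : R := sqrt (rsum d (fun i => v i ^ 2)).
Definition is_unit (d : nat) (v : nat -> R) : Prop := vnorm d v = 1.

Definition nondegenerate (d : nat) (N : fps) : Prop :=
  ~ (exists g : nat -> R, is_unit d g /\ fps_eq0 d (dirderiv d N g)).

(* homsum d j F = sum of F a over multi-indices a supported in {0..d-1}
   with |a| = j (a finite sum). *)
Fixpoint homsum (d j : nat) (F : mindex -> R) : R :=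
  match d with
  | O => if Nat.eqb j 0 then F (fun _ => 0%nat) else 0
  | S d' => rsum (S j) (fun m => homsum d' (j - m) (fun b => F (upd b d' m)))
  end.

Definition mono (d : nat) (u : nat -> R) (a : mindex) : R :=
  rprod d (fun i => u i ^ (a i)).

(* d_t^j f(t u) |_{t=0} = j! * (coefficient of t^j in f(tu)). *)
Definition jet (d : nat) (f : fps) (u : nat -> R) (j : nat) : R :=
  INR (fact j) * homsum d j (fun a => f a * mono d u a).

Definition zdir (d : nat) (k : nat -> Z) : nat -> R :=
  fun i => IZR (k i) / vnorm d (fun l => IZR (k l)).

From Stdlib Require Import Reals ZArith Arith Lra Lia Psatz Classical FunctionalExtensionality.
Open Scope R_scope.

(* For a unit vector u and an order j let L(u,j) be the vector whose i-th entry is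
   d_t^j (d_{r_i} N)(t u)|_{t=0}.  The j-th jet along u of <g, d_r N> is the linear
   form <L(u,j), g> ([jet_dirderiv]).
   1. The coefficients of a homogeneous polynomial are determined by its values
      on the unit sphere ([homsum_coeffs_zero], [homsum_zero_on_sphere]).  Hence if
      <L(u,j), g> = 0 for all unit u and all j then <g, d_r N> = 0 as a formal series,
      and non-degeneracy forces g = 0: the family L separates R^d ([jets_separating]).
   2. Any family of linear forms separating R^d contains finitely many members
      L_1, ..., L_n with |g|_1 <= C * sum_m |<L_m, g>| for every g
      ([finite_control], by Gaussian elimination on the last coordinate).
   3. A unit vector g has |g|_1 >= 1, so by pigeonhole some |<L_m, g>| is at least
      1 / (C (n+1)); p is the largest order among L_1, ..., L_n.  Taking g = k/|k|
      gives the theorem. *)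

Lemma rsum_ext n f g : (forall i, (i < n)%nat -> f i = g i) -> rsum n f = rsum n g.
Proof.
  induction n as [|n IH]; simpl; intros H; auto.
  rewrite IH by (intros; apply H; lia). rewrite H by lia. reflexivity.
Qed.

Lemma rsum_plus n f g : rsum n (fun i => f i + g i) = rsum n f + rsum n g.
Proof. induction n as [|n IH]; simpl; [lra|]. rewrite IH; lra. Qed.

Lemma rsum_scal n c f : rsum n (fun i => c * f i) = c * rsum n f.
Proof. induction n as [|n IH]; simpl; [lra|]. rewrite IH; lra. Qed.

Lemma rsum_scal_r n c f : rsum n (fun i => f i * c) = rsum n f * c.
Proof. induction n as [|n IH]; simpl; [lra|]. rewrite IH; lra. Qed.

Lemma rsum_le n f g : (forall i, (i < n)%nat -> f i <= g i) -> rsum n f <= rsum n g.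
Proof.
  induction n as [|n IH]; simpl; intros H; [lra|].
  assert (f n <= g n) by (apply H; lia).
  assert (rsum n f <= rsum n g) by (apply IH; intros; apply H; lia). lra.
Qed.

Lemma rsum_zero n f : (forall i, (i < n)%nat -> f i = 0) -> rsum n f = 0.
Proof.
  induction n as [|n IH]; simpl; intros H; auto.
  rewrite IH, H by (intros; try apply H; lia). lra.
Qed.

Lemma rsum_nonneg n f : (forall i, (i < n)%nat -> 0 <= f i) -> 0 <= rsum n f.
Proof.
  intros H. replace 0 with (rsum n (fun _ => 0)) by (apply rsum_zero; auto).
  apply rsum_le; auto.
Qed.

Lemma rsum_abs n f : Rabs (rsum n f) <= rsum n (fun i => Rabs (f i)).
Proof.
  induction n as [|n IH]; simpl.
  - rewrite Rabs_R0; lra.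
  - eapply Rle_trans; [apply Rabs_triang|]. lra.
Qed.

Lemma rsum_term_le n f i :
  (forall l, (l < n)%nat -> 0 <= f l) -> (i < n)%nat -> f i <= rsum n f.
Proof.
  induction n as [|n IH]; simpl; intros H Hi; [lia|].
  assert (0 <= rsum n f) by (apply rsum_nonneg; intros; apply H; lia).
  destruct (Nat.eq_dec i n) as [->|Hne]; [lra|].
  assert (f i <= rsum n f) by (apply IH; [intros; apply H|]; lia).
  assert (0 <= f n) by (apply H; lia). lra.
Qed.

Lemma rsum_bound n g b : (forall m, (m < n)%nat -> g m <= b) -> rsum n g <= INR n * b.
Proof.
  induction n as [|n IH]; intros H; simpl rsum; [simpl; lra|]. rewrite S_INR.
  assert (rsum n g <= INR n * b) by (apply IH; intros; apply H; lia).
  assert (g n <= b) by (apply H; lia). lra.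
Qed.

Lemma rsum_sq_nonneg d u : 0 <= rsum d (fun i => u i ^ 2).
Proof. apply rsum_nonneg; intros; apply pow2_ge_0. Qed.

Lemma rsum_sq_zero n f :
  rsum n (fun i => f i ^ 2) = 0 -> forall i, (i < n)%nat -> f i = 0.
Proof.
  intros H i Hi.
  assert (f i ^ 2 <= rsum n (fun i => f i ^ 2))
    by (apply (rsum_term_le n (fun i => f i ^ 2)); auto; intros; apply pow2_ge_0).
  pose proof (pow2_ge_0 (f i)). nra.
Qed.

Lemma rsum_sq_pos n f i : (i < n)%nat -> f i <> 0 -> 0 < rsum n (fun l => f l ^ 2).
Proof.
  intros Hi Hne.
  assert (f i ^ 2 <= rsum n (fun l => f l ^ 2))
    by (apply (rsum_term_le n (fun l => f l ^ 2)); auto; intros; apply pow2_ge_0).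
  pose proof (Rsqr_pos_lt _ Hne). unfold Rsqr in *. simpl in *. lra.
Qed.

Lemma poly_growth_bound n c x : 1 <= x ->
  x * Rabs (rsum n (fun m => c m * x ^ m)) <= rsum n (fun m => Rabs (c m)) * x ^ n.
Proof.
  intros Hx. induction n as [|n IH]; simpl; [rewrite Rabs_R0; lra|].
  assert (0 <= x ^ n) by (apply pow_le; lra).
  assert (Rabs (rsum n (fun m => c m * x ^ m) + c n * x ^ n) <=
          Rabs (rsum n (fun m => c m * x ^ m)) + Rabs (c n) * x ^ n).
  { eapply Rle_trans; [apply Rabs_triang|].
    rewrite Rabs_mult, (Rabs_right (x ^ n)); lra. }
  assert (0 <= rsum n (fun m => Rabs (c m))) by (apply rsum_nonneg; intros; apply Rabs_pos).
  assert (x ^ n <= x * x ^ n) by nra.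
  pose proof (Rabs_pos (c n)). nra.
Qed.

Lemma poly_coeffs_zero n c :
  (forall x, rsum n (fun m => c m * x ^ m) = 0) -> forall m, (m < n)%nat -> c m = 0.
Proof.
  revert c; induction n as [|n IH]; intros c H m Hm; [lia|].
  (* The leading coefficient vanishes, else c n x^n dominates for x large. *)
  assert (Hlead : c n = 0).
  { apply NNPP; intros Hne. set (B := rsum n (fun m => Rabs (c m))).
    assert (0 <= B) by (apply rsum_nonneg; intros; apply Rabs_pos).
    assert (Hp : 0 < Rabs (c n)) by (apply Rabs_pos_lt; auto).
    set (x := 1 + (B + 1) / Rabs (c n)).
    assert (Hx : Rabs (c n) * x = Rabs (c n) + B + 1) by (unfold x; field; lra).
    assert (Hx1 : 1 <= x).
    { assert (0 <= (B + 1) / Rabs (c n)) by (apply Rle_mult_inv_pos; lra). unfold x; lra. }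
    pose proof (poly_growth_bound n c x Hx1) as Hb. fold B in Hb.
    pose proof (H x) as Hroot. simpl in Hroot.
    replace (rsum n (fun m => c m * x ^ m)) with (- (c n * x ^ n)) in Hb by lra.
    rewrite Rabs_Ropp, Rabs_mult, (Rabs_right (x ^ n)) in Hb
      by (apply Rle_ge, pow_le; lra).
    assert (0 < x ^ n) by (apply pow_lt; lra). nra. }
  destruct (Nat.eq_dec m n) as [->|Hne]; auto.
  apply IH; [|lia]. intros x. pose proof (H x) as Hx. simpl in Hx.
  rewrite Hlead in Hx. lra.
Qed.

Fixpoint msize (d : nat) (a : mindex) : nat :=
  match d with O => O | S d' => (msize d' a + a d')%nat end.

Lemma msize_ext d a b : (forall i, (i < d)%nat -> a i = b i) -> msize d a = msize d b.
Proof.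
  induction d as [|d IH]; simpl; intros H; auto.
  rewrite IH, H by (intros; try apply H; lia). reflexivity.
Qed.

Lemma upd_neq a i m l : l <> i -> upd a i m l = a l.
Proof. intros H; unfold upd. destruct (Nat.eqb_spec l i); congruence. Qed.

Lemma upd_eq a i m : upd a i m i = m.
Proof. unfold upd. rewrite Nat.eqb_refl. reflexivity. Qed.

Lemma homsum_ext_on d : forall j F G,
  (forall a, supp_in d a -> msize d a = j -> F a = G a) -> homsum d j F = homsum d j G.
Proof.
  induction d as [|d IH]; intros j F G H; cbn [homsum].
  - destruct (Nat.eqb_spec j 0); auto. apply H; auto. intros i _; reflexivity.
  - apply rsum_ext. intros m Hm. apply IH. intros b Hb Hs. apply H.
    + intros i Hi. unfold upd. destruct (Nat.eqb_spec i d); [lia|]. apply Hb; lia.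
    + simpl. rewrite upd_eq, (msize_ext d _ b); [lia|].
      intros i Hi; apply upd_neq; lia.
Qed.

Lemma homsum_ext d j F G : (forall a, F a = G a) -> homsum d j F = homsum d j G.
Proof. intros H; apply homsum_ext_on; auto. Qed.

Lemma homsum_plus d : forall j F G,
  homsum d j (fun a => F a + G a) = homsum d j F + homsum d j G.
Proof.
  induction d as [|d IH]; intros j F G; cbn [homsum].
  - destruct (Nat.eqb j 0); lra.
  - rewrite <- rsum_plus. apply rsum_ext; intros. apply IH.
Qed.

Lemma homsum_scal d : forall j c F, homsum d j (fun a => c * F a) = c * homsum d j F.
Proof.
  induction d as [|d IH]; intros j c F; cbn [homsum].
  - destruct (Nat.eqb j 0); lra.
  - rewrite <- rsum_scal. apply rsum_ext; intros. apply IH.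
Qed.

Lemma homsum_scal_r d j c F : homsum d j (fun a => F a * c) = homsum d j F * c.
Proof. rewrite Rmult_comm, <- homsum_scal. apply homsum_ext; intros; ring. Qed.

Lemma homsum_rsum d j n (G : nat -> mindex -> R) :
  homsum d j (fun a => rsum n (fun i => G i a)) = rsum n (fun i => homsum d j (G i)).
Proof.
  induction n as [|n IH]; simpl.
  - transitivity (homsum d j (fun a => 0 * 0)); [apply homsum_ext; intros; ring|].
    rewrite (homsum_scal d j 0 (fun _ => 0)). ring.
  - rewrite homsum_plus, IH. reflexivity.
Qed.

Lemma rprod_ext n f g : (forall i, (i < n)%nat -> f i = g i) -> rprod n f = rprod n g.
Proof.
  induction n as [|n IH]; simpl; intros H; auto.
  rewrite IH, H by (intros; try apply H; lia). reflexivity.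
Qed.

Lemma mono_ext d u v a : (forall i, (i < d)%nat -> u i = v i) -> mono d u a = mono d v a.
Proof. intros H; unfold mono; apply rprod_ext; intros; rewrite H; auto. Qed.

Lemma mono_scal d c u a : mono d (fun i => c * u i) a = c ^ msize d a * mono d u a.
Proof.
  unfold mono; induction d as [|d IH]; simpl; [lra|].
  rewrite IH, pow_add, Rpow_mult_distr. ring.
Qed.

Lemma mono_upd d u b m : mono (S d) u (upd b d m) = mono d u b * u d ^ m.
Proof.
  unfold mono; simpl. rewrite upd_eq. f_equal.
  apply rprod_ext. intros i Hi. rewrite upd_neq by lia. reflexivity.
Qed.

Lemma homsum_homogeneous d j F c u :
  homsum d j (fun a => F a * mono d (fun i => c * u i) a)
  = c ^ j * homsum d j (fun a => F a * mono d u a).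
Proof.
  rewrite <- homsum_scal. apply homsum_ext_on. intros a _ Hs.
  rewrite mono_scal, Hs. ring.
Qed.

Lemma homsum_mono_ext d j F u v : (forall i, (i < d)%nat -> u i = v i) ->
  homsum d j (fun a => F a * mono d u a) = homsum d j (fun a => F a * mono d v a).
Proof. intros H; apply homsum_ext; intros; rewrite (mono_ext d u v); auto. Qed.

(* Induction on d: viewed as a polynomial in the last
   variable, each coefficient is a vanishing homogeneous polynomial in d-1 variables. *)
Lemma homsum_coeffs_zero d : forall j F,
  (forall u, homsum d j (fun a => F a * mono d u a) = 0) ->
  forall a, supp_in d a -> msize d a = j -> F a = 0.
Proof.
  induction d as [|d IH]; intros j F H a Ha Hs.
  - simpl in Hs. subst j. pose proof (H (fun _ => 0)) as H0. cbn [homsum Nat.eqb] in H0.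
    assert (a = fun _ => 0%nat) as ->
      by (apply functional_extensionality; intros; apply Ha; lia).
    unfold mono in H0; simpl in H0. lra.
  - assert (Hslice : forall m v, (m <= j)%nat ->
       homsum d (j - m) (fun b => F (upd b d m) * mono d v b) = 0).
    { intros m v Hmj.
      apply (poly_coeffs_zero (S j)
               (fun m => homsum d (j - m) (fun b => F (upd b d m) * mono d v b))); [|lia].
      intros x. rewrite <- (H (fun i => if Nat.eqb i d then x else v i)). cbn [homsum].
      apply rsum_ext. intros m0 _. rewrite <- homsum_scal_r. apply homsum_ext. intros b.
      rewrite mono_upd, Nat.eqb_refl,
        (mono_ext d (fun i => if Nat.eqb i d then x else v i) v); [ring|].
      intros i Hi. destruct (Nat.eqb_spec i d); auto; lia. }
    simpl in Hs. set (b := upd a d 0).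
    assert (Hb : supp_in d b).
    { intros i Hi. unfold b, upd. destruct (Nat.eqb_spec i d); auto. apply Ha; lia. }
    assert (Hbs : msize d b = (j - a d)%nat).
    { rewrite (msize_ext d b a); [lia|]. intros i Hi; unfold b; apply upd_neq; lia. }
    assert (Hab : upd b d (a d) = a).
    { apply functional_extensionality; intros i. unfold b, upd.
      destruct (Nat.eqb_spec i d); subst; auto. }
    rewrite <- Hab. apply (IH (j - a d)%nat (fun b => F (upd b d (a d)))); auto.
    intros u. apply Hslice. lia.
Qed.

Lemma unit_of_sum_sq d u : rsum d (fun i => u i ^ 2) = 1 -> is_unit d u.
Proof. intros H; unfold is_unit, vnorm. rewrite H. apply sqrt_1. Qed.

Lemma normalize_sum_sq d u : 0 < rsum d (fun i => u i ^ 2) ->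
  rsum d (fun i => (/ sqrt (rsum d (fun i => u i ^ 2)) * u i) ^ 2) = 1.
Proof.
  intros H. set (s := rsum d (fun i => u i ^ 2)) in *.
  rewrite (rsum_ext d _ (fun i => / s * u i ^ 2)).
  - rewrite rsum_scal. fold s. apply Rinv_l. lra.
  - intros i _. rewrite Rpow_mult_distr, pow_inv. simpl.
    rewrite Rmult_1_r, sqrt_sqrt by lra. reflexivity.
Qed.

Definition e0 : nat -> R := fun i => if Nat.eqb i 0 then 1 else 0.

Lemma e0_unit d : (1 <= d)%nat -> is_unit d e0.
Proof.
  intros Hd. apply unit_of_sum_sq.
  induction d as [|[|d] IH]; [lia|unfold e0; simpl; ring|].
  change (rsum (S (S d)) (fun i => e0 i ^ 2))
    with (rsum (S d) (fun i => e0 i ^ 2) + e0 (S d) ^ 2).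
  rewrite IH by lia. unfold e0; simpl. ring.
Qed.

(* By homogeneity, vanishing on the unit sphere implies vanishing everywhere. *)
Lemma homsum_zero_on_sphere d j F : (1 <= d)%nat ->
  (forall u, is_unit d u -> homsum d j (fun a => F a * mono d u a) = 0) ->
  forall u, homsum d j (fun a => F a * mono d u a) = 0.
Proof.
  intros Hd H u. set (s := rsum d (fun i => u i ^ 2)).
  destruct (Rle_lt_or_eq_dec _ _ (rsum_sq_nonneg d u)) as [Hp|Hz].
  - assert (Hs : 0 < sqrt s) by (apply sqrt_lt_R0; auto).
    rewrite (homsum_mono_ext d j F u (fun i => sqrt s * (/ sqrt s * u i)))
      by (intros; field; lra).
    rewrite homsum_homogeneous, H; [ring|].
    apply unit_of_sum_sq, normalize_sum_sq; auto.
  - rewrite (homsum_mono_ext d j F u (fun i => 0 * e0 i)).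
    + rewrite homsum_homogeneous, H by (apply e0_unit; auto). ring.
    + intros i Hi. rewrite (rsum_sq_zero d u (eq_sym Hz) i Hi). ring.
Qed.

Lemma sum_abs_ge1 d g : rsum d (fun i => g i ^ 2) = 1 -> 1 <= rsum d (fun i => Rabs (g i)).
Proof.
  intros H. rewrite <- H. apply rsum_le. intros i Hi.
  assert (g i ^ 2 <= 1).
  { rewrite <- H. apply (rsum_term_le d (fun i => g i ^ 2)); auto.
    intros; apply pow2_ge_0. }
  pose proof (Rabs_pos (g i)). rewrite <- (pow2_abs (g i)) in *. nra.
Qed.

Definition lf (d : nat) (c g : nat -> R) : R := rsum d (fun i => c i * g i).

Definition l1norm (d : nat) (g : nat -> R) : R := rsum d (fun i => Rabs (g i)).

Definition separating (d : nat) {I : Type} (F : I -> nat -> R) : Prop :=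
  forall g, (forall x, lf d (F x) g = 0) -> forall i, (i < d)%nat -> g i = 0.

Definition controls (d : nat) {I : Type} (F : I -> nat -> R)
    (n : nat) (xs : nat -> I) (C : R) : Prop :=
  forall g, l1norm d g <= C * rsum n (fun m => Rabs (lf d (F (xs m)) g)).

Lemma lf_S d c g : lf (S d) c g = lf d c g + c d * g d.
Proof. reflexivity. Qed.

Lemma lf_ext d c g h : (forall i, (i < d)%nat -> g i = h i) -> lf d c g = lf d c h.
Proof. intros H; unfold lf; apply rsum_ext; intros; rewrite H; auto. Qed.

Lemma l1norm_nonneg d g : 0 <= l1norm d g.
Proof. apply rsum_nonneg; intros; apply Rabs_pos. Qed.

Lemma lf_bound d c g : Rabs (lf d c g) <= l1norm d c * l1norm d g.
Proof.
  unfold lf, l1norm. eapply Rle_trans; [apply rsum_abs|].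
  rewrite <- rsum_scal_r. apply rsum_le. intros i Hi.
  rewrite Rabs_mult. apply Rmult_le_compat_l; [apply Rabs_pos|].
  apply (rsum_term_le d (fun i => Rabs (g i))); auto. intros; apply Rabs_pos.
Qed.

Lemma pivot_coord_bound d c g :
  Rabs (c d) * Rabs (g d) <= Rabs (lf (S d) c g) + l1norm d c * l1norm d g.
Proof.
  rewrite <- Rabs_mult, lf_S. pose proof (lf_bound d c g).
  pose proof (Rabs_triang (lf d c g + c d * g d) (- lf d c g)) as Ht.
  replace (lf d c g + c d * g d + - lf d c g) with (c d * g d) in Ht by ring.
  rewrite Rabs_Ropp in Ht. lra.
Qed.

Lemma separating_pivot d I (F : I -> nat -> R) :
  separating (S d) F -> exists x0, F x0 d <> 0.
Proof.
  intros Hsep. apply NNPP; intros Hnone.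
  set (ed := fun i => if Nat.eqb i d then 1 else 0).
  assert (Hed : ed d = 0).
  { apply Hsep; [|lia]. intros x. rewrite lf_S.
    assert (Hx : F x d = 0) by (apply NNPP; intros Hc; apply Hnone; exists x; auto).
    rewrite Hx. unfold lf. rewrite rsum_zero; [ring|].
    intros i Hi. unfold ed. destruct (Nat.eqb_spec i d); [lia|ring]. }
  unfold ed in Hed; rewrite Nat.eqb_refl in Hed. lra.
Qed.

Definition eliminated (d : nat) {I : Type} (F : I -> nat -> R) (x0 : I) : I -> nat -> R :=
  fun x i => F x i - F x d / F x0 d * F x0 i.

Definition snoc {I : Type} (xs : nat -> I) (n : nat) (x : I) : nat -> I :=
  fun m => if Nat.ltb m n then xs m else x.

Lemma rsum_snoc {I : Type} (h : I -> R) xs n x :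
  rsum (S n) (fun m => h (snoc xs n x m)) = rsum n (fun m => h (xs m)) + h x.
Proof.
  simpl rsum. unfold snoc at 2. rewrite Nat.ltb_irrefl. f_equal.
  apply rsum_ext. intros m Hm. unfold snoc. destruct (Nat.ltb_spec m n); [auto|lia].
Qed.

Section Elimination.

Variables (d : nat) (I : Type) (F : I -> nat -> R) (x0 : I).
Hypothesis Hpivot : F x0 d <> 0.

Lemma lf_eliminated x g :
  lf d (eliminated d F x0 x) g = lf (S d) (F x) g - F x d / F x0 d * lf (S d) (F x0) g.
Proof.
  rewrite !lf_S. unfold lf, eliminated.
  rewrite (rsum_ext d _ (fun i => F x i * g i + (- (F x d / F x0 d)) * (F x0 i * g i)))
    by (intros; ring).
  rewrite rsum_plus, rsum_scal. field. exact Hpivot.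
Qed.

(* The eliminated forms separate R^d: a common kernel vector extends, by a suitable
   last coordinate, to a common kernel vector of the original family. *)
Lemma separating_eliminated : separating (S d) F -> separating d (eliminated d F x0).
Proof.
  intros Hsep g Hg i Hi.
  set (t := - lf d (F x0) g / F x0 d).
  set (gt := fun l => if Nat.eqb l d then t else g l).
  assert (Hlow : forall c, lf d c gt = lf d c g).
  { intros c; apply lf_ext. intros l Hl. unfold gt. destruct (Nat.eqb_spec l d); [lia|auto]. }
  assert (Hperp : lf (S d) (F x0) gt = 0).
  { rewrite lf_S, Hlow. unfold gt; rewrite Nat.eqb_refl. unfold t. field. exact Hpivot. }
  assert (Hgi : gt i = 0).
  { apply Hsep; [|lia]. intros x. pose proof (lf_eliminated x gt) as He.
    rewrite Hlow, Hg, Hperp in He. lra. }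
  unfold gt in Hgi. destruct (Nat.eqb_spec i d); [lia|auto].
Qed.

Lemma eliminated_sum_bound n xs g :
  rsum n (fun m => Rabs (lf d (eliminated d F x0 (xs m)) g))
  <= (1 + rsum n (fun m => Rabs (F (xs m) d / F x0 d)))
     * rsum (S n) (fun m => Rabs (lf (S d) (F (snoc xs n x0 m)) g)).
Proof.
  rewrite (rsum_snoc (fun x => Rabs (lf (S d) (F x) g))).
  set (A := Rabs (lf (S d) (F x0) g)).
  set (S' := rsum n (fun m => Rabs (lf (S d) (F (xs m)) g))).
  set (Kr := rsum n (fun m => Rabs (F (xs m) d / F x0 d))).
  assert (HS : 0 <= S') by (apply rsum_nonneg; intros; apply Rabs_pos).
  assert (HA : 0 <= A) by apply Rabs_pos.
  assert (HK : 0 <= Kr) by (apply rsum_nonneg; intros; apply Rabs_pos).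
  apply Rle_trans with (S' + Kr * A); [|nra].
  unfold S', Kr. rewrite <- rsum_scal_r, <- rsum_plus. apply rsum_le. intros m _.
  rewrite lf_eliminated. eapply Rle_trans; [apply Rabs_triang|].
  rewrite Rabs_Ropp, Rabs_mult. fold A. lra.
Qed.

Lemma controls_extend n xs C :
  0 < C -> controls d (eliminated d F x0) n xs C ->
  exists C', 0 < C' /\ controls (S d) F (S n) (snoc xs n x0) C'.
Proof.
  intros HC Hctl.
  set (K := 1 + rsum n (fun m => Rabs (F (xs m) d / F x0 d))).
  set (B := l1norm d (F x0)).
  set (a := Rabs (F x0 d)).
  assert (Ha : 0 < a) by (apply Rabs_pos_lt; auto).
  assert (HK : 1 <= K).
  { assert (0 <= rsum n (fun m => Rabs (F (xs m) d / F x0 d)))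
      by (apply rsum_nonneg; intros; apply Rabs_pos). unfold K; lra. }
  assert (HB : 0 <= B) by apply l1norm_nonneg.
  exists (C * K + (1 + B * C * K) / a). split.
  { assert (0 <= B * C * K) by (repeat apply Rmult_le_pos; lra).
    assert (0 < (1 + B * C * K) / a) by (apply Rdiv_lt_0_compat; lra).
    assert (0 < C * K) by (apply Rmult_lt_0_compat; lra). lra. }
  intros g.
  set (T := rsum (S n) (fun m => Rabs (lf (S d) (F (snoc xs n x0 m)) g))).
  set (A := Rabs (lf (S d) (F x0) g)).
  assert (HAT : A <= T).
  { unfold T. rewrite (rsum_snoc (fun x => Rabs (lf (S d) (F x) g))).
    assert (0 <= rsum n (fun m => Rabs (lf (S d) (F (xs m)) g)))
      by (apply rsum_nonneg; intros; apply Rabs_pos). fold A; lra. }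
  set (G := l1norm d g).
  assert (HG0 : 0 <= G) by apply l1norm_nonneg.
  assert (HG : G <= C * K * T).
  { eapply Rle_trans; [apply Hctl|]. rewrite Rmult_assoc.
    apply Rmult_le_compat_l; [lra|]. apply eliminated_sum_bound. }
  assert (Hgd : a * Rabs (g d) <= (1 + B * C * K) * T).
  { pose proof (pivot_coord_bound d (F x0) g) as Hp. fold a A B G in Hp. nra. }
  assert (Hgd' : Rabs (g d) <= (1 + B * C * K) / a * T).
  { apply (Rmult_le_reg_l a); [exact Ha|].
    replace (a * ((1 + B * C * K) / a * T)) with ((1 + B * C * K) * T) by (field; lra).
    exact Hgd. }
  change (l1norm (S d) g) with (G + Rabs (g d)). nra.
Qed.

End Elimination.

Lemma finite_control d : forall (I : Type) (x_def : I) (F : I -> nat -> R),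
  separating d F -> exists n xs C, 0 < C /\ controls d F n xs C.
Proof.
  induction d as [|d IH]; intros I x_def F Hsep.
  - exists 0%nat, (fun _ => x_def), 1. split; [lra|]. intros g. unfold l1norm; simpl; lra.
  - destruct (separating_pivot d I F Hsep) as [x0 Hx0].
    destruct (IH I x_def _ (separating_eliminated d I F x0 Hx0 Hsep))
      as [n [xs [C [HC Hctl]]]].
    destruct (controls_extend d I F x0 Hx0 n xs C HC Hctl) as [C' [HC' Hctl']].
    exists (S n), (snoc xs n x0), C'. auto.
Qed.

Lemma controls_pigeonhole d I (F : I -> nat -> R) n xs C g :
  0 < C -> controls d F n xs C -> 1 <= l1norm d g ->
  exists m, (m < n)%nat /\ / (C * (INR n + 1)) <= Rabs (lf d (F (xs m)) g).
Proof.
  intros HC Hctl Hg. apply NNPP; intros Hnone.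
  assert (Hn : 0 <= INR n) by apply pos_INR.
  assert (Hsum : rsum n (fun m => Rabs (lf d (F (xs m)) g)) <= INR n * / (C * (INR n + 1))).
  { apply rsum_bound. intros m Hm. apply Rnot_lt_le. intros Hlt.
    apply Hnone. exists m. split; [auto|lra]. }
  assert (Hlt1 : C * (INR n * / (C * (INR n + 1))) < 1).
  { replace (C * (INR n * / (C * (INR n + 1)))) with (INR n / (INR n + 1)) by (field; lra).
    apply (Rmult_lt_reg_r (INR n + 1)); [lra|].
    unfold Rdiv. rewrite Rmult_assoc, Rinv_l by lra. lra. }
  pose proof (Hctl g). nra.
Qed.


Lemma jet_dirderiv d N g u j :
  jet d (dirderiv d N g) u j = lf d (fun i => jet d (pderiv N i) u j) g.
Proof.
  unfold jet, dirderiv, lf.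
  rewrite (homsum_ext d j _ (fun a => rsum d (fun i => (pderiv N i a * mono d u a) * g i)))
    by (intros a; rewrite <- rsum_scal_r; apply rsum_ext; intros; ring).
  rewrite homsum_rsum, <- rsum_scal. apply rsum_ext. intros i _.
  rewrite homsum_scal_r. ring.
Qed.

Lemma dirderiv_scal d N c g a : dirderiv d N (fun i => c * g i) a = c * dirderiv d N g a.
Proof. unfold dirderiv. rewrite <- rsum_scal. apply rsum_ext; intros; ring. Qed.

Definition unit_jet_index (d : nat) : Type := {x : (nat -> R) * nat | is_unit d (fst x)}.

Definition jet_form (d : nat) (N : fps) (x : unit_jet_index d) : nat -> R :=
  fun i => jet d (pderiv N i) (fst (proj1_sig x)) (snd (proj1_sig x)).

(* Non-degeneracy says exactly that these vectors separate R^d: a common kernel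
   vector g makes every jet of <g, d_r N> vanish on the sphere, hence <g, d_r N> = 0. *)
Lemma jets_separating d N : (1 <= d)%nat -> nondegenerate d N -> separating d (jet_form d N).
Proof.
  intros Hd hN g Hg i Hi. apply NNPP; intros Hne.
  set (s := rsum d (fun l => g l ^ 2)).
  assert (Hs : 0 < s) by (apply (rsum_sq_pos d g i); auto).
  assert (Hvanish : fps_eq0 d (dirderiv d N g)).
  { intros a Ha. apply (homsum_coeffs_zero d (msize d a) (dirderiv d N g)); auto.
    apply homsum_zero_on_sphere; auto. intros u Hu.
    pose proof (Hg (exist _ (u, msize d a) Hu)) as Hj. unfold jet_form in Hj; simpl in Hj.
    rewrite <- jet_dirderiv in Hj. unfold jet in Hj.
    apply Rmult_integral in Hj as [Hf|]; auto. exfalso; apply (INR_fact_neq_0 _ Hf). }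
  apply hN. exists (fun l => / sqrt s * g l). split.
  - apply unit_of_sum_sq, normalize_sum_sq; auto.
  - intros a Ha. rewrite dirderiv_scal, Hvanish by auto. ring.
Qed.

Fixpoint max_below (f : nat -> nat) (n : nat) : nat :=
  match n with O => O | S n' => Nat.max (max_below f n') (f n') end.

Lemma max_below_ge f n m : (m < n)%nat -> (f m <= max_below f n)%nat.
Proof.
  induction n as [|n IH]; simpl; intros H; [lia|].
  destruct (Nat.eq_dec m n) as [->|Hne]; [lia|]. specialize (IH ltac:(lia)). lia.
Qed.

Lemma uniform_jet_bound d N : nondegenerate d N ->
  exists (p : nat) (sigma : R), 0 < sigma /\
    forall g, rsum d (fun i => g i ^ 2) = 1 ->
      exists u, is_unit d u /\ exists j, (j <= p)%nat /\
        sigma <= Rabs (jet d (dirderiv d N g) u j).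
Proof.
  intros hN. destruct (Nat.eq_dec d 0) as [->|Hd].
  { exists 0%nat, 1. split; [lra|]. simpl; intros g Hg. lra. }
  set (x_def := exist (fun x => is_unit d (fst x)) (e0, 0%nat) (e0_unit d ltac:(lia))
                : unit_jet_index d).
  destruct (finite_control d _ x_def (jet_form d N) (jets_separating d N ltac:(lia) hN))
    as [n [xs [C [HC Hctl]]]].
  exists (max_below (fun m => snd (proj1_sig (xs m))) n), (/ (C * (INR n + 1))).
  split; [apply Rinv_0_lt_compat; pose proof (pos_INR n); nra|].
  intros g Hg.
  destruct (controls_pigeonhole d _ _ n xs C g HC Hctl (sum_abs_ge1 d g Hg)) as [m [Hm Hge]].
  exists (fst (proj1_sig (xs m))). split; [exact (proj2_sig (xs m))|].
  exists (snd (proj1_sig (xs m))). split.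
  - apply (max_below_ge (fun m => snd (proj1_sig (xs m)))); auto.
  - rewrite jet_dirderiv. exact Hge.
Qed.

Lemma zdir_sum_sq d k : (exists i, (i < d)%nat /\ k i <> 0%Z) ->
  rsum d (fun i => zdir d k i ^ 2) = 1.
Proof.
  intros [i [Hi Hki]]. set (kr := fun l => IZR (k l)).
  assert (Hs : 0 < rsum d (fun l => kr l ^ 2))
    by (apply (rsum_sq_pos d kr i); [|apply not_0_IZR]; auto).
  rewrite <- (normalize_sum_sq d kr Hs). apply rsum_ext; intros l _.
  unfold zdir, vnorm, Rdiv. fold kr. rewrite Rmult_comm. reflexivity.
Qed.

Theorem lemma5p1 (d : nat) (N : fps) (hN : nondegenerate d N) :
  exists (p : nat) (sigma : R), 0 < sigma /\
    forall k : nat -> Z, (exists i, (i < d)%nat /\ k i <> 0%Z) ->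
      exists u : nat -> R, is_unit d u /\
        exists j : nat, (j <= p)%nat /\
          sigma <= Rabs (jet d (dirderiv d N (zdir d k)) u j).
Proof.
  destruct (uniform_jet_bound d N hN) as [p [sigma [Hsigma Hbound]]].
  exists p, sigma. split; [exact Hsigma|].
  intros k Hk. apply Hbound, zdir_sum_sq, Hk.
Qed.
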